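(* Let $\mathcal{R}$ be the involutive system $u_{ij}=f_{ij}(x^1,x^2,x^3,u,u_i,u_j)$, $1\le i<j\le3$, let $\Theta=\mu\theta$ satisfy on $\mathcal{R}^\infty$ the system $X_lX_k(\Theta)+A^l_{lk}X_l(\Theta)+A^k_{lk}X_k(\Theta)+C_{lk}\Theta=0$ ($1\le l\ne k\le3$), and let $\xi_{ij}=X_j(\Theta)+A^i_{ij}\Theta$ be the $(i,j)$ Laplace transform of $\Theta$ for an ordered pair $i\ne j$. Let $\hat A^j_{ij}$ denote the coefficient of $X_j(\xi_{ij})$ in the $(i,j)$ equation $X_iX_j(\xi_{ij})+\hat A^i_{ij}X_i(\xi_{ij})+\hat A^j_{ij}X_j(\xi_{ij})+\hat C_{ij}\xi_{ij}=0$ of the system satisfied by $\xi_{ij}$, and let $\mathcal{X}_{ji}(\xi_{ij})=X_i(\xi_{ij})+\hat A^j_{ij}\xi_{ij}$ be the $(j,i)$ Laplace transform of $\xi_{ij}$ with respect to that system. If $H_{ij}\neq0$, then the $(i,j)$ Laplace transform has an inverse given by $\Theta=\frac{1}{H_{ij}}\,\mathcal{X}_{ji}(\xi_{ij}).$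
   Context: Setting: $U\subset\mathbb{R}^3$ open connected, $E=U\times(a,b)\to U$ trivial bundle, $J^\infty(E)$ with contact forms $\theta_I=du_I-\sum_ju_{Ij}dx^j$, $\theta=du-\sum_iu_idx^i$. $\mathcal{R}$: $F_{ij}:=u_{ij}-f_{ij}(x^1,x^2,x^3,u,u_i,u_j)=0$, $1\le i<j\le3$, $f_{ij}$ smooth with $D_kf_{ij}=D_if_{kj}$ for distinct $i,j,k$; $\mathcal{R}^\infty$ its infinite prolongation; $X_i=D_i$ the commuting total derivatives on $\mathcal{R}^\infty$, acting on contact forms by projected Lie derivative, $X_j(\theta_I)=\theta_{Ij}$. With $a^i_{ij}=\partial F_{ij}/\partial u_i$, $a^j_{ij}=\partial F_{ij}/\partial u_j$, $c_{ij}=\partial F_{ij}/\partial u$ and a nonvanishing function $\mu$, $\Theta=\mu\theta$ satisfies the system above with $A^i_{ij}=a^i_{ij}-X_j(\mu)/\mu$, $A^j_{ij}=a^j_{ij}-X_i(\mu)/\mu$, $C_{ij}=c_{ij}-X_iX_j(\mu)/\mu-a^i_{ij}X_i(\mu)/\mu-a^j_{ij}X_j(\mu)/\mu+2X_i(\mu)X_j(\mu)/\mu^2$, coefficients symmetric in lower indices. Laplace invariant: $H_{ij}=D_i(A^i_{ij})+A^i_{ij}A^j_{ij}-C_{ij}$. *)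

(* abstract differential-algebra model of R^infty.
   R  = ring of (smooth) functions on R^infty,
   M  = R-module of contact forms on R^infty,
   D k = total derivative X_k acting on functions,
   X k = total derivative X_k acting on contact forms (projected Lie derivative). *)
From HB Require Import structures.
From mathcomp Require Import all_boot all_order all_algebra.
Set Implicit Arguments. Unset Strict Implicit. Unset Printing Implicit Defensive.
Import Order.TTheory GRing.Theory Num.Theory.
Local Open Scope ring_scope.

Section Defs.
Variables (R : comUnitRingType) (M : lmodType R).

Definition derivation_family (D : 'I_3 -> R -> R) : Prop :=
  [/\ (forall k f g, D k (f + g) = D k f + D k g),
      (forall k f g, D k (f * g) = D k f * g + f * D k g) &
      (forall k l f, D k (D l f) = D l (D k f))].

Definition compatible_action (D : 'I_3 -> R -> R) (X : 'I_3 -> M -> M) : Prop :=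
  [/\ (forall k m n, X k (m + n) = X k m + X k n),
      (forall k f m, X k (f *: m) = D k f *: m + f *: X k m) &
      (forall k l m, X k (X l m) = X l (X k m))].

(* theta, theta_k = X_k theta, theta_kk = X_k X_k theta (k = 1,2,3) are part of
   the contact basis of R^infty, hence linearly independent over functions. *)
Definition contact_indep (X : 'I_3 -> M -> M) (theta : M) : Prop :=
  forall (c0 : R) (c1 c2 : 'I_3 -> R),
    c0 *: theta + \sum_(k < 3) c1 k *: X k theta
      + \sum_(k < 3) c2 k *: X k (X k theta) = 0 ->
    c0 = 0 /\ (forall k, c1 k = 0 /\ c2 k = 0).

(* Convention: a l k = a^l_{lk} = dF_{lk}/du_l, c l k = c_{lk};
   Acoef l k = A^l_{lk} (coefficient of X_l in the (l,k) equation). *)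
Definition Acoef (D : 'I_3 -> R -> R) (a : 'I_3 -> 'I_3 -> R) (mu : R) (l k : 'I_3) : R :=
  a l k - D k mu / mu.

Definition Ccoef (D : 'I_3 -> R -> R) (a c : 'I_3 -> 'I_3 -> R) (mu : R) (l k : 'I_3) : R :=
  c l k - D l (D k mu) / mu - a l k * D l mu / mu - a k l * D k mu / mu
    + 2%:R * D l mu * D k mu / mu ^+ 2.

Definition Hinv (D : 'I_3 -> R -> R) (a c : 'I_3 -> 'I_3 -> R) (mu : R) (i j : 'I_3) : R :=
  D i (Acoef D a mu i j) + Acoef D a mu i j * Acoef D a mu j i - Ccoef D a c mu i j.

Definition laplace (X : 'I_3 -> M -> M) (A : 'I_3 -> 'I_3 -> R) (Theta : M) (i j : 'I_3) : M :=
  X j Theta + A i j *: Theta.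

End Defs.

(* The (i,j) equation of Theta = mu theta gives the Laplace identity
   X_i(xi) = H_ij Theta - A^j_ij xi for xi = X_j(Theta) + A^i_ij Theta.
   Substituting it into the (i,j) equation of xi, the only term containing
   theta_jj = X_j X_j theta is (hat A^j_ij - A^j_ij) mu theta_jj, so the
   independence of theta, theta_j, theta_jj forces hat A^j_ij = A^j_ij.
   Hence X_i(xi) + hat A^j_ij xi = H_ij Theta, and H_ij is invertible. *)
From HB Require Import structures.
From mathcomp Require Import all_boot all_order all_algebra.
From mathcomp Require Import ring.
Import Order.TTheory GRing.Theory Num.Theory.
Local Open Scope ring_scope.
Set Implicit Arguments. Unset Strict Implicit.

Section LinearCombination.
Variables (R : pzRingType) (M : lmodType R) (v1 v2 v3 : M).

Definition comb3 (c1 c2 c3 : R) : M := c1 *: v1 + c2 *: v2 + c3 *: v3.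

Lemma comb3D a1 a2 a3 b1 b2 b3 :
  comb3 a1 a2 a3 + comb3 b1 b2 b3 = comb3 (a1 + b1) (a2 + b2) (a3 + b3).
Proof. by rewrite /comb3 !scalerDl addrACA; congr (_ + _); rewrite addrACA. Qed.

Lemma comb3Z r c1 c2 c3 : r *: comb3 c1 c2 c3 = comb3 (r * c1) (r * c2) (r * c3).
Proof. by rewrite /comb3 !scalerDr !scalerA. Qed.

Lemma comb3N c1 c2 c3 : - comb3 c1 c2 c3 = comb3 (- c1) (- c2) (- c3).
Proof. by rewrite /comb3 !opprD !scaleNr. Qed.

Lemma scale_v1 c : c *: v1 = comb3 c 0 0.
Proof. by rewrite /comb3 !scale0r !addr0. Qed.

Lemma scale_v2 c : c *: v2 = comb3 0 c 0.
Proof. by rewrite /comb3 !scale0r add0r addr0. Qed.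

Lemma scale_v3 c : c *: v3 = comb3 0 0 c.
Proof. by rewrite /comb3 !scale0r !add0r. Qed.

(* Rewriting with comb3E turns a module expression in v1, v2, v3 into a single
   comb3, so module identities reduce to ring identities between coefficients.
   The vectors must be given explicitly: otherwise unification unfolds comb3. *)
Definition comb3E := (comb3D, comb3Z, comb3N, scale_v1, scale_v2, scale_v3).

End LinearCombination.
Arguments comb3E {R M} v1 v2 v3.

Section CompatibleAction.
Variables (R : comUnitRingType) (M : lmodType R).
Variables (D : 'I_3 -> R -> R) (X : 'I_3 -> M -> M).
Hypothesis hX : compatible_action D X.

Lemma actD k m n : X k (m + n) = X k m + X k n.
Proof. by case: hX. Qed.

Lemma actZ k f m : X k (f *: m) = D k f *: m + f *: X k m.
Proof. by case: hX. Qed.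

Lemma actC k l m : X k (X l m) = X l (X k m).
Proof. by case: hX. Qed.

Lemma act0 k : X k 0 = 0.
Proof. by apply/esym/(addrI (X k 0)); rewrite addr0 -actD addr0. Qed.

Lemma actN k m : X k (- m) = - X k m.
Proof. by apply/eqP; rewrite -subr_eq0 opprK -actD addNr act0. Qed.

Lemma act_laplace (A : 'I_3 -> 'I_3 -> R) (C : R) (T : M) (i j : 'I_3) :
  X i (X j T) + A i j *: X i T + A j i *: X j T + C *: T = 0 ->
  X i (laplace X A T i j) =
    (D i (A i j) + A i j * A j i - C) *: T - A j i *: laplace X A T i j.
Proof.
move=> eqT; rewrite /laplace actD actZ !scalerDr.
have -> : X i (X j T) = - (A i j *: X i T + A j i *: X j T + C *: T).
  by apply/eqP; rewrite -subr_eq0 opprK !addrA eqT.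
by rewrite !(comb3E (X i T) (X j T) T); congr comb3; ring.
Qed.

Lemma contact_indep_jj (theta : M) (j : 'I_3) (c0 c1 c2 : R) :
  contact_indep X theta ->
  comb3 theta (X j theta) (X j (X j theta)) c0 c1 c2 = 0 -> c2 = 0.
Proof.
move=> indep eq0.
pose at_j (c : R) (k : 'I_3) := if k == j then c else 0.
have sum_at_j c (f : 'I_3 -> M) : \sum_(k < 3) at_j c k *: f k = c *: f j.
  rewrite (bigD1 j) //= /at_j eqxx big1 ?addr0 // => k /negbTE ->.
  exact: scale0r.
have := indep c0 (at_j c1) (at_j c2).
rewrite (sum_at_j c1 (fun k => X k theta)) (sum_at_j c2 (fun k => X k (X k theta))).
by case/(_ eq0) => _ /(_ j) [_]; rewrite /at_j eqxx.
Qed.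

Lemma laplace_eq_coef_Xj (theta : M) (mu : R) (A : 'I_3 -> 'I_3 -> R) (i j : 'I_3)
    (H Ahi Ahj Chat : R) :
  contact_indep X theta -> mu \is a GRing.unit ->
  let xi := laplace X A (mu *: theta) i j in
  X i xi = H *: (mu *: theta) - A j i *: xi ->
  X i (X j xi) + Ahi *: X i xi + Ahj *: X j xi + Chat *: xi = 0 ->
  Ahj = A j i.
Proof.
move=> indep mu_unit xi Xi_xi eq_xi.
rewrite actC Xi_xi /xi /laplace in eq_xi.
rewrite !(actD, actN, actZ) !scalerDr in eq_xi.
rewrite !(comb3E theta (X j theta) (X j (X j theta))) in eq_xi.
have /eqP : (Ahj - A j i) * mu = 0.
  by rewrite -(contact_indep_jj indep eq_xi); ring.
by rewrite mulIr_eq0 ?subr_eq0 => [/eqP|]; last exact: mulIr.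
Qed.

End CompatibleAction.

Theorem proposition3p7 (R : comUnitRingType) (M : lmodType R)
  (D : 'I_3 -> R -> R) (X : 'I_3 -> M -> M) (theta : M)
  (a c : 'I_3 -> 'I_3 -> R) (mu : R) (i j : 'I_3) (Ahi Ahj Chat : R) :
  derivation_family D ->
  compatible_action D X ->
  contact_indep X theta ->
  (forall l k, c l k = c k l) ->
  (* theta satisfies the linearized equations on R^infty *)
  (forall l k, l != k ->
     X l (X k theta) + a l k *: X l theta + a k l *: X k theta + c l k *: theta = 0) ->
  mu \is a GRing.unit ->
  (* Theta = mu theta satisfies the system with coefficients A, C *)
  (forall l k, l != k ->
     X l (X k (mu *: theta)) + Acoef D a mu l k *: X l (mu *: theta)
       + Acoef D a mu k l *: X k (mu *: theta) + Ccoef D a c mu l k *: (mu *: theta) = 0) ->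
  i != j ->
  (* the (i,j) equation satisfied by xi_{ij}, with Ahj = hat A^j_{ij} *)
  X i (X j (laplace X (Acoef D a mu) (mu *: theta) i j))
    + Ahi *: X i (laplace X (Acoef D a mu) (mu *: theta) i j)
    + Ahj *: X j (laplace X (Acoef D a mu) (mu *: theta) i j)
    + Chat *: laplace X (Acoef D a mu) (mu *: theta) i j = 0 ->
  Hinv D a c mu i j \is a GRing.unit ->
  mu *: theta =
    (Hinv D a c mu i j)^-1 *:
      (X i (laplace X (Acoef D a mu) (mu *: theta) i j)
        + Ahj *: laplace X (Acoef D a mu) (mu *: theta) i j).
Proof.
move=> _ hX indep _ _ mu_unit eq_Theta neq_ij eq_xi H_unit.
have Xi_xi := act_laplace hX (eq_Theta i j neq_ij).
rewrite -/(Hinv D a c mu i j) in Xi_xi.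
have hatA_j := laplace_eq_coef_Xj hX indep mu_unit Xi_xi eq_xi.
by rewrite Xi_xi hatA_j subrK !scalerA mulKr.
Qed.
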